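(* Let $n\geq 1$ and let $Q\in\mathbb{Q}^{n\times n}$ be a rational orthogonal matrix with level $\ell$, and let $d_1,\ldots,d_n$ be the diagonal entries of the Smith normal form of the integer matrix $\ell Q$. Suppose that $X$ is a random symmetric integer $n\times n$ matrix whose upper-triangular entries $\{X_{i,j}:i\leq j\}$ have independent and uniformly distributed reductions to $\mathbb{Z}/\ell^2\mathbb{Z}$. Then $$\mathbb{P}(Q^{T}XQ\in\mathbb{Z}^{n\times n})=\prod_{i=1}^{\lfloor n/2\rfloor}\prod_{j=i}^{n-i}\frac{d_id_j}{\ell^2}.$$
   Context: The level of a rational matrix $Q$ is the least integer $\ell\geq 1$ with $\ell Q\in\mathbb{Z}^{n\times n}$. The Smith normal form entries $d_1,\ldots,d_n$ are taken to be nonnegative integers with $d_1\mid d_2\mid\cdots\mid d_n$, so that the Smith ideals of $\ell Q$ over $\mathbb{Z}$ are $d_i\mathbb{Z}$. *)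

From HB Require Import structures.
From mathcomp Require Import all_boot all_order all_algebra.
From mathcomp Require Import all_classical all_reals all_analysis.
Set Implicit Arguments. Unset Strict Implicit. Unset Printing Implicit Defensive.
Import Order.TTheory GRing.Theory Num.Theory.
Local Open Scope ring_scope.
Local Open Scope classical_set_scope.

Definition int_mx m n (A : 'M[rat]_(m, n)) : Prop :=
  forall i j, A i j \is a Num.int.

Definition is_level n (Q : 'M[rat]_n) (l : nat) : Prop :=
  (0 < l)%N /\ int_mx (l%:R *: Q) /\
  forall k : nat, (0 < k)%N -> int_mx (k%:R *: Q) -> (l <= k)%N.

Definition rat_orthogonal n (Q : 'M[rat]_n) : Prop := Q^T *m Q = 1%:M.

Definition smith_diag n (M : 'M[int]_n) (d : seq int) : Prop :=
  [/\ size d = n, all (fun x => 0 <= x) d, sorted (fun a b => (a %| b)%Z) d &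
      exists2 U : 'M[int]_n, U \in unitmx &
      exists2 V : 'M[int]_n, V \in unitmx &
        M = U *m (\matrix_(i, j) (d`_i *+ (i == j :> nat))) *m V].

Definition mutually_independent_int (R : realType) (d : measure_display)
  (T : measurableType d) (P : probability T R) (I : finType) (A : {set I})
  (Y : I -> T -> int) : Prop :=
  forall (S : {set I}) (a : I -> int), S \subset A ->
    P (\bigcap_(i in [set i | i \in S]) [set w | Y i w = a i]) =
    (\prod_(i in S) P [set w | Y i w = a i])%E.

Definition uniform_mod (R : realType) (d : measure_display)
  (T : measurableType d) (P : probability T R) (m : nat) (Y : T -> int) : Prop :=
  forall a : int, 0 <= a < m%:Z -> P [set w | Y w = a] = (m%:R^-1)%:E.

(* Write L = l Q = U diag(d) V with U, V unimodular.  Since L^T L = l^2 I, the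
   matrix diag(d) (U^T U) diag(d) equals l^2 V^-T V^-1; for every prime p both
   U^T U and V^-T V^-1 have a permutation of entries prime to p (their
   determinants are units), and comparing p-adic valuations along these
   permutations, using d_1 | ... | d_n, gives d_i d_(n+1-i) = l^2.
   The event Q^T X Q integral says L^T X L = 0 mod l^2, so it only depends on
   the residues of X mod l^2.  The substitution Y = U^T X U permutes symmetric
   residue matrices and turns the condition into d_i d_j Y_ij = 0 mod l^2 for
   i <= j, which has gcd(d_i d_j, l^2) solutions Y_ij; by d_i d_(n+1-i) = l^2
   this gcd is d_i d_j when i + j <= n and l^2 otherwise.  Independence and
   uniformity of the residues make the probability the number of solutions
   divided by (l^2)^(n(n+1)/2). *)

From HB Require Import structures.
From mathcomp Require Import all_boot all_order all_algebra.
From mathcomp Require Import all_classical all_reals all_analysis.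
From mathcomp Require Import perm zify.
Import Order.TTheory GRing.Theory Num.Theory.
Set Implicit Arguments. Unset Strict Implicit. Unset Printing Implicit Defensive.

(** * Counting in ordinals *)

Lemma card_ord_ltn n c : c <= n -> #|[set j : 'I_n | j < c]| = c.
Proof.
move=> le_cn; have widen_inj : injective (widen_ord le_cn) by move=> x y /(congr1 val) /= /val_inj.
rewrite -[RHS]card_ord -(card_imset _ widen_inj).
apply: eq_card => j; rewrite inE; apply/idP/imsetP => [lt_jc|[k _ ->]]; last exact: (ltn_ord k).
by exists (Ordinal lt_jc); last exact: val_inj.
Qed.

Lemma card_ord_geq n c : c <= n -> #|[set j : 'I_n | c <= j]| = n - c.
Proof.
move=> le_cn; rewrite -[in RHS](card_ord_ltn le_cn) cardsCs card_ord.
by congr (_ - _); apply: eq_card => j; rewrite !inE -ltnNge.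
Qed.

Lemma injective_exists_notin (T T' : finType) (f : T -> T') (A : {set T}) (B : {set T'}) :
  injective f -> #|B| < #|A| -> exists2 x, x \in A & f x \notin B.
Proof.
move=> f_inj ltBA; have [/exists_inP//|/exists_inPn fAB] := boolP [exists x in A, f x \notin B].
have /subset_leq_card : f @: A \subset B.
  by apply/fintype.subsetP => _ /imsetP[x Ax ->]; rewrite -[_ \in B]negbK fAB.
by rewrite card_imset // leqNgt ltBA.
Qed.

Lemma antidiagonal_sum n (v : nat -> nat) (a : nat) (s t : 'I_n -> 'I_n) :
  (forall j k, j <= k < n -> v j <= v k) -> injective s -> injective t ->
  (forall j : 'I_n, a <= v j + v (s j)) -> (forall k : 'I_n, v k + v (t k) <= a) ->
  forall i, i < n -> v i + v (n.-1 - i) = a.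
Proof.
move=> v_mono s_inj t_inj lb ub i lt_in.
(* Pigeonhole: some j <= i has s j <= n.-1 - i and some k >= i has t k >= n.-1 - i. *)
have [j] : exists2 j : 'I_n,
    j \in [set j : 'I_n | j < i.+1] & s j \notin [set k : 'I_n | n - i <= k].
  by apply: injective_exists_notin; rewrite // card_ord_ltn // card_ord_geq; lia.
rewrite !inE -ltnNge => le_ji lt_sj.
have [k] : exists2 k : 'I_n,
    k \in [set k : 'I_n | i <= k] & t k \notin [set j : 'I_n | j < n.-1 - i].
  by apply: injective_exists_notin; rewrite // card_ord_ltn ?card_ord_geq; lia.
rewrite !inE -leqNgt => le_ik le_tk.
have := lb j; have := ub k.
have := v_mono j i; have := v_mono (s j) (n.-1 - i).
have := v_mono i k; have := v_mono (n.-1 - i) (t k).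
have := ltn_ord k; have := ltn_ord (s j); have := ltn_ord (t k).
lia.
Qed.

Lemma card_ord_dvdn k d : 0 < k -> d %| k -> #|[pred x : 'I_k | d %| x]| = k %/ d.
Proof.
move=> k_gt0 dvd_dk; rewrite -sum1_card big_mkcond /=.
rewrite -(big_mkord xpredT (fun x => nat_of_bool (d %| x))) big_ltn // dvdn0.
by rewrite divn_count_dvd big_nat_recr // dvd_dk addnC.
Qed.

Lemma card_ord_dvdn_mul k c : 0 < k -> #|[pred x : 'I_k | k %| c * x]| = gcdn c k.
Proof.
move=> k_gt0; set g := gcdn c k; have g_gt0 : 0 < g by rewrite gcdn_gt0 k_gt0 orbT.
have k_eq : k = g * (k %/ g) by rewrite mulnC divnK // dvdn_gcdr.
have dvd_mulE x : (k %| c * x) = (k %/ g %| x).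
  rewrite -[RHS](dvdn_pmul2l g_gt0) -k_eq; apply/idP/idP => [dvd_k|dvd_g].
    by rewrite /g muln_gcdl dvdn_gcd dvd_k dvdn_mulr.
  by apply: dvdn_trans dvd_g _; rewrite dvdn_mul ?dvdn_gcdl.
rewrite (eq_card (B := [pred x : 'I_k | k %/ g %| x])) => [|x]; last by rewrite !inE dvd_mulE.
have kg_gt0 : 0 < k %/ g by rewrite divn_gt0 // dvdn_leq // dvdn_gcdr.
by rewrite card_ord_dvdn ?dvdn_div ?dvdn_gcdr // {1}k_eq mulnK.
Qed.

Local Open Scope ring_scope.

Lemma prod_upper_antidiagonal (R : comPzSemiRingType) n (F : nat -> nat -> R) :
  \prod_(p : 'I_n * 'I_n | (p.1 <= p.2)%N) (if (p.1 + p.2 + 2 <= n)%N then F p.1 p.2 else 1) =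
  \prod_(1 <= i < (n./2).+1) \prod_(i <= j < (n - i).+1) F i.-1 j.-1.
Proof.
rewrite -(pair_big_dep xpredT (fun i j : 'I_n => (i <= j)%N)
  (fun i j : 'I_n => if (i + j + 2 <= n)%N then F i j else 1)) /=.
transitivity (\prod_(0 <= i < n) \prod_(i <= j < n.-1 - i) F i j).
  rewrite big_mkord; apply: eq_bigr => i _.
  rewrite (big_nat_widen _ _ n); last by lia.
  rewrite (big_nat_widenl i 0) // big_mkord big_mkcond [RHS]big_mkcond /=.
  apply: eq_bigr => j _; rewrite andbC.
  case: (leqP i j) => //= _.
  by have -> : (i + j + 2 <= n)%N = (j < n.-1 - i)%N by apply/idP/idP; lia.
have le_half : (n./2 <= n)%N by lia.
rewrite (big_cat_nat (leq0n _) le_half) /= [X in _ * X]big_nat_cond.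
rewrite [X in _ * X]big1 ?mulr1; last first.
  by move=> i /andP[/andP[ge_i _] _]; rewrite big_geq //; lia.
rewrite big_add1 /=; apply: eq_big_nat => i _; rewrite big_add1 /=.
by have -> : (n - i.+1 = n.-1 - i)%N by lia.
Qed.

(** * Smith form of a scaled orthogonal integer matrix *)

Lemma unitmx_perm_ndvdz n (A : 'M[int]_n) (p : nat) : prime p -> A \in unitmx ->
  exists s : 'S_n, forall i, ~~ (p%:Z %| A i (s i))%Z.
Proof.
move=> p_pr; rewrite unitmxE => /unitrPr[y det_y].
have [/existsP[s /forallP]|] := boolP [exists s : 'S_n, [forall i, ~~ (p%:Z %| A i (s i))%Z]].
  by exists s.
rewrite negb_exists => /forallP dvd_term; suff : (p%:Z %| (\det A * y)%R)%Z.
  by rewrite det_y dvdz1 absz_nat => /eqP p1; rewrite p1 in p_pr.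
rewrite dvdz_mulr // /determinant; elim/big_ind: _ => [|x z|s _]; first exact: dvdz0.
  exact: rpredD.
have /existsP[i] := dvd_term s; rewrite negbK => dvd_i.
by rewrite dvdz_mull // (bigD1 i) //= dvdz_mulr.
Qed.

Lemma gram_smith (R : comUnitRingType) n (m : R) (L U D V : 'M[R]_n) :
  L^T *m L = m%:M -> V \in unitmx -> L = U *m D *m V ->
  D^T *m (U^T *m U) *m D = m *: ((invmx V)^T *m invmx V).
Proof.
move=> LtL V_unit L_def.
have : V^T *m (D^T *m (U^T *m U) *m D) *m V = m%:M by rewrite -LtL L_def !trmx_mul !mulmxA.
move: (D^T *m _ *m D) => X VXV.
have trVK : (invmx V)^T *m V^T = 1%:M by rewrite -trmx_mul mulmxV // trmx1.
have -> : X = (invmx V)^T *m (V^T *m X *m V) *m invmx V.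
  by rewrite !mulmxA trVK mul1mx -mulmxA mulmxV // mulmx1.
by rewrite VXV mul_mx_scalar -scalemxAl.
Qed.

Lemma diag_mx_conjE (R : comPzRingType) n (d : 'rV[R]_n) (A : 'M[R]_n) i j :
  (diag_mx d *m A *m diag_mx d) i j = d 0 i * A i j * d 0 j.
Proof. by rewrite mul_diag_mx mul_mx_diag !mxE. Qed.

Lemma logn_abszM p (x y : int) : x != 0 -> y != 0 ->
  logn p (absz (x * y)) = (logn p (absz x) + logn p (absz y))%N.
Proof. by move=> x0 y0; rewrite abszM lognM // absz_gt0. Qed.

Lemma logn_absz_ndvd p (x : int) : prime p -> ~~ (p%:Z %| x)%Z -> logn p (absz x) = 0%N.
Proof. by move=> p_pr ndvd; apply: logn_coprime; rewrite prime_coprime // -dvdzE. Qed.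

Section SmithScaledOrthogonal.

Variables (n m : nat) (L U V : 'M[int]_n) (d : seq int).
Hypotheses (m_gt0 : (0 < m)%N) (LtL : L^T *m L = m%:Z%:M).
Hypotheses (U_unit : U \in unitmx) (V_unit : V \in unitmx).
Hypotheses (d_size : size d = n) (d_ge0 : all (>= 0) d).
Hypothesis d_sorted : sorted (fun a b => (a %| b)%Z) d.
Hypothesis L_smith : L = U *m diag_mx (\row_(i < n) d`_i) *m V.

Let m_neq0 : m%:Z != 0. Proof. by rewrite eqz_nat -lt0n. Qed.

Let G := U^T *m U.
Let W := (invmx V)^T *m invmx V.

Let gramE (j k : 'I_n) : d`_j * G j k * d`_k = m%:Z * W j k.
Proof.
have := diag_mx_conjE (\row_(i < n) d`_i) G j k.
by rewrite -[X in X *m G]tr_diag_mx (gram_smith LtL V_unit L_smith) !mxE => <-.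
Qed.

Let G_unit : G \in unitmx.
Proof. by rewrite unitmxE det_mulmx det_tr unitrM -unitmxE U_unit. Qed.

Let W_unit : W \in unitmx.
Proof. by rewrite unitmxE det_mulmx det_tr unitrM -unitmxE unitmx_inv V_unit. Qed.

Lemma smith_diag_gt0 i : (i < n)%N -> 0 < d`_i.
Proof.
(* Any prime would do: all that is needed is a permutation of nonzero entries of W. *)
move=> lt_in; have [t t_ndvd] := unitmx_perm_ndvdz (isT : prime 2) W_unit.
rewrite lt_def (allP d_ge0) ?mem_nth ?d_size // andbT; apply/eqP => di0.
have := t_ndvd (Ordinal lt_in); have /esym/eqP := gramE (Ordinal lt_in) (t (Ordinal lt_in)).
by rewrite /= di0 !mul0r mulf_eq0 (negbTE m_neq0) /= => /eqP ->; rewrite dvdz0.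
Qed.

Lemma logn_smith_pair p i : prime p -> (i < n)%N ->
  (logn p (absz (d`_i)%R) + logn p (absz (d`_(n.-1 - i))%R))%N = logn p m.
Proof.
move=> p_pr; pose v k := logn p (absz d`_k).
have d_neq0 (k : 'I_n) : d`_k != 0 by rewrite gt_eqF ?smith_diag_gt0.
have gram_logn (j k : 'I_n) : W j k != 0 -> G j k != 0 ->
    (v j + logn p (absz (G j k)) + v k = logn p m + logn p (absz (W j k)))%N.
  move=> Wjk0 Gjk0; rewrite /v -!logn_abszM ?mulf_neq0 // gramE.
  by rewrite logn_abszM ?absz_nat // -lt0n.
have [s s_ndvd] := unitmx_perm_ndvdz p_pr G_unit.
have [t t_ndvd] := unitmx_perm_ndvdz p_pr W_unit.
apply: (antidiagonal_sum (v := v) (s := s) (t := t)); try exact: perm_inj.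
- move=> j k /andP[le_jk lt_kn]; apply: dvdn_leq_log.
    by rewrite absz_gt0 gt_eqF ?smith_diag_gt0.
  rewrite -dvdzE; apply: (sorted_leq_nth dvdz_trans dvdzz) => //; rewrite inE d_size //; lia.
- move=> j; have Gs_neq0 : G j (s j) != 0.
    by apply: contraNneq (s_ndvd j) => ->; rewrite dvdz0.
  have : m%:Z * W j (s j) != 0 by rewrite -gramE !mulf_neq0.
  rewrite mulf_eq0 negb_or => /andP[_ Ws_neq0].
  by have := gram_logn _ _ Ws_neq0 Gs_neq0; rewrite logn_absz_ndvd //; lia.
- move=> k; have Wt_neq0 : W k (t k) != 0.
    by apply: contraNneq (t_ndvd k) => ->; rewrite dvdz0.
  have : d`_k * G k (t k) * d`_(t k) != 0 by rewrite gramE mulf_neq0.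
  rewrite !mulf_eq0 !negb_or => /andP[/andP[_ Gt_neq0] _].
  by have := gram_logn _ _ Wt_neq0 Gt_neq0; rewrite (logn_absz_ndvd _ (t_ndvd k)) //; lia.
Qed.

Lemma smith_diag_pair i : (i < n)%N -> d`_i * d`_(n.-1 - i) = m%:Z.
Proof.
move=> lt_in; have lt_n1i : (n.-1 - i < n)%N by lia.
have di_gt0 := smith_diag_gt0 lt_in; have dn1i_gt0 := smith_diag_gt0 lt_n1i.
rewrite -[d`_i]gtz0_abs // -[d`_(n.-1 - i)]gtz0_abs // -PoszM; congr Posz.
apply: eqn_from_log; rewrite ?muln_gt0 ?absz_gt0 ?gt_eqF // => p.
have [p_pr|not_pr] := boolP (prime p); last by rewrite /logn !ifN // => /andP[].
by rewrite lognM ?absz_gt0 ?gt_eqF // logn_smith_pair.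
Qed.

Lemma gcdn_smith i j : (i <= j < n)%N ->
  gcdn (absz (d`_i * d`_j)) m = if (i + j + 2 <= n)%N then absz (d`_i * d`_j) else m.
Proof.
move=> /andP[le_ij lt_jn]; have lt_in : (i < n)%N by lia.
have dvd_smith a b : (a <= b < n)%N -> dvdn (absz d`_a) (absz d`_b).
  move=> /andP[le_ab lt_bn]; rewrite -dvdzE.
  by apply: (sorted_leq_nth dvdz_trans dvdzz) => //; rewrite inE d_size //; lia.
have m_eq : (absz (d`_i)%R * absz (d`_(n.-1 - i))%R = m)%N by rewrite -abszM smith_diag_pair.
have di_gt0 : (0 < absz (d`_i)%R)%N by rewrite absz_gt0 gt_eqF ?smith_diag_gt0.
case: ifP => [le_ijn|gt_ijn]; [apply/gcdn_idPl | apply/gcdn_idPr];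
  rewrite abszM -m_eq dvdn_pmul2l // dvd_smith //; lia.
Qed.

Lemma prod_gcdn_smith (R : numFieldType) :
  (\prod_(p : 'I_n * 'I_n | p.1 <= p.2) gcdn (absz (d`_p.1 * d`_p.2)%R) m)%N%:R
    * (m%:R^-1) ^+ #|[set p : 'I_n * 'I_n | (p.1 <= p.2)%N]| =
  \prod_(1 <= i < (n./2).+1) \prod_(i <= j < (n - i).+1) ((d`_i.-1 * d`_j.-1)%:~R / m%:R : R).
Proof.
rewrite -(prod_upper_antidiagonal _ (fun i j => (d`_i * d`_j)%:~R / m%:R)) natr_prod -prodr_const.
rewrite [X in _ * X](eq_bigl (fun p : 'I_n * 'I_n => p.1 <= p.2)%N) => [|p]; last by rewrite inE.
rewrite -big_split /=; apply: eq_bigr => -[i j] /= le_ij.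
rewrite gcdn_smith ?le_ij ?ltn_ord //; case: ifP => _; last by rewrite mulfV ?pnatr_eq0 -?lt0n.
by rewrite natr_absz ger0_norm // mulr_ge0 // ltW // smith_diag_gt0.
Qed.

End SmithScaledOrthogonal.

(** * Residue patterns of symmetric matrices *)

Section DvdzMatrices.

Variable k : int.

Lemma mxOver_dvdz_mull m n p (A : 'M[int]_(m, n)) (B : 'M[int]_(n, p)) :
  B \is a mxOver (dvdz k) -> A *m B \is a mxOver (dvdz k).
Proof.
move=> /mxOverP dvdB; apply/mxOverP => i j; rewrite mxE.
by apply: rpred_sum => l _; rewrite dvdz_mull.
Qed.

Lemma mxOver_dvdz_mulr m n p (A : 'M[int]_(m, n)) (B : 'M[int]_(n, p)) :
  A \is a mxOver (dvdz k) -> A *m B \is a mxOver (dvdz k).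
Proof.
move=> /mxOverP dvdA; apply/mxOverP => i j; rewrite mxE.
by apply: rpred_sum => l _; rewrite dvdz_mulr.
Qed.

Lemma mxOver_dvdz_unit_conj n (V A : 'M[int]_n) : V \in unitmx ->
  (V^T *m A *m V \is a mxOver (dvdz k)) = (A \is a mxOver (dvdz k)).
Proof.
move=> V_unit; apply/idP/idP => [dvd_conj|dvdA]; last first.
  by apply: mxOver_dvdz_mulr; apply: mxOver_dvdz_mull.
have -> : A = (invmx V)^T *m (V^T *m A *m V) *m invmx V.
  by rewrite !mulmxA -trmx_mul mulmxV // trmx1 mul1mx -mulmxA mulmxV // mulmx1.
by apply: mxOver_dvdz_mulr; apply: mxOver_dvdz_mull.
Qed.

Lemma mxOver_dvdz_diag_conj n (d : 'rV[int]_n) (A : 'M[int]_n) :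
  (diag_mx d *m A *m diag_mx d \is a mxOver (dvdz k)) =
  [forall i, forall j, d 0 i * A i j * d 0 j \in dvdz k].
Proof.
apply/mxOverP/forallP => [dvd_conj i|dvd_conj i j].
  by apply/forallP => j; rewrite -diag_mx_conjE.
by rewrite diag_mx_conjE (forallP (dvd_conj i)).
Qed.

End DvdzMatrices.

Section ResiduePatterns.

Variables n m : nat.

Local Notation pattern := {ffun 'I_n * 'I_n -> 'I_m.+1}.

(* A pattern stores the residues mod m.+1 of a symmetric matrix on and above
   the diagonal; the entries below it are pinned to 0, so that patterns are in
   bijection with symmetric residue matrices. *)
Definition upper_pattern (h : pattern) :=
  [forall p : 'I_n * 'I_n, (p.2 < p.1)%N ==> (h p == ord0)].

Definition sym_of_pattern (h : pattern) : 'M[int]_n :=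
  \matrix_(i, j) (h (if (i <= j)%N then (i, j) else (j, i)) : nat)%:Z.

Definition pattern_of_mx (Z : 'M[int]_n) : pattern :=
  [ffun p : 'I_n * 'I_n => if (p.1 <= p.2)%N then inord (absz (Z p.1 p.2 %% m.+1)%Z) else ord0].

Lemma sym_of_pattern_tr h : (sym_of_pattern h)^T = sym_of_pattern h.
Proof.
apply/matrixP => i j; rewrite !mxE.
by case: (ltngtP i j) => [lt_ij|lt_ji|/val_inj->].
Qed.

Lemma upper_pattern_of_mx (Z : 'M[int]_n) : upper_pattern (pattern_of_mx Z).
Proof. by apply/forallP => p; rewrite ffunE; case: leqP. Qed.

Lemma modz_natK (z : int) : ((inord (absz (z %% m.+1)%Z) : 'I_m.+1) : nat)%:Z = (z %% m.+1)%Z.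
Proof.
have mod_ge0 : 0 <= (z %% m.+1)%Z by rewrite modz_ge0.
by rewrite inordK ?gez0_abs // -ltz_nat gez0_abs ?ltz_pmod.
Qed.

Lemma pattern_of_mxP h (Z : 'M[int]_n) : upper_pattern h ->
  reflect (forall p : 'I_n * 'I_n, (p.1 <= p.2)%N -> (Z p.1 p.2 %% m.+1)%Z = (h p : nat)%:Z)
          (pattern_of_mx Z == h).
Proof.
move=> /forallP h_upper; apply: (iffP eqP) => [<- p le_p|h_mod].
  by rewrite ffunE le_p modz_natK.
apply/ffunP => p; rewrite ffunE; case: ifPn => [le_p|]; last first.
  by rewrite -ltnNge => lt_p; rewrite (eqP (implyP (h_upper p) lt_p)).
by apply: val_inj; apply/eqP; rewrite -eqz_nat modz_natK h_mod.
Qed.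

Lemma sym_of_patternK h : upper_pattern h -> pattern_of_mx (sym_of_pattern h) = h.
Proof.
move=> h_upper; apply/eqP/pattern_of_mxP => // p le_p.
by rewrite mxE le_p -surjective_pairing modz_small // ltz_nat ltn_ord.
Qed.

Lemma pattern_of_mx_congr (Z1 Z2 : 'M[int]_n) : Z1 - Z2 \is a mxOver (dvdz m.+1) ->
  pattern_of_mx Z1 = pattern_of_mx Z2.
Proof.
move=> /mxOverP dvd_diff; apply/ffunP => p; rewrite !ffunE; case: ifP => // _.
by congr (inord (absz _)); apply/eqP; rewrite eqz_mod_dvd; have := dvd_diff p.1 p.2; rewrite !mxE.
Qed.

Lemma sym_of_pattern_of_mx (Z : 'M[int]_n) : Z^T = Z ->
  sym_of_pattern (pattern_of_mx Z) - Z \is a mxOver (dvdz m.+1).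
Proof.
move=> Z_sym; apply/mxOverP => i j; rewrite !mxE.
have modz_dvd (z : int) : (z %% m.+1)%Z - z \in dvdz m.+1 by rewrite -eqz_mod_dvd modz_mod.
case: leqP => [le_ij|/ltnW le_ji]; rewrite ffunE /= ?le_ij ?le_ji modz_natK //.
by rewrite -[in X in X - _]Z_sym mxE.
Qed.

Definition pattern_conj (U : 'M[int]_n) (h : pattern) :=
  pattern_of_mx (U^T *m sym_of_pattern h *m U).

Lemma pattern_conj_congr (U Z : 'M[int]_n) : Z^T = Z ->
  pattern_conj U (pattern_of_mx Z) = pattern_of_mx (U^T *m Z *m U).
Proof.
move=> Z_sym; apply: pattern_of_mx_congr.
by rewrite -mulmxBl -mulmxBr mxOver_dvdz_mulr // mxOver_dvdz_mull // sym_of_pattern_of_mx.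
Qed.

Lemma pattern_conjK (A B : 'M[int]_n) h : upper_pattern h -> B *m A = 1%:M ->
  pattern_conj A (pattern_conj B h) = h.
Proof.
move=> h_upper BA; rewrite pattern_conj_congr; last first.
  by rewrite !trmx_mul trmxK sym_of_pattern_tr mulmxA.
by rewrite !mulmxA -trmx_mul BA trmx1 mul1mx -mulmxA BA mulmx1 sym_of_patternK.
Qed.

Definition annihilated (L : 'M[int]_n) (h : pattern) :=
  L^T *m sym_of_pattern h *m L \is a mxOver (dvdz m.+1).

Definition diag_annihilated (d : 'rV[int]_n) (h : pattern) :=
  [forall p : 'I_n * 'I_n, (p.1 <= p.2)%N ==> (m.+1 %| absz (d 0 p.1 * d 0 p.2)%R * h p)%N].

Lemma annihilated_diag (d : 'rV[int]_n) h :
  annihilated (diag_mx d) h = diag_annihilated d h.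
Proof.
rewrite /annihilated /diag_annihilated tr_diag_mx mxOver_dvdz_diag_conj.
have entryE (i j : 'I_n) : (i <= j)%N ->
    (d 0 i * sym_of_pattern h i j * d 0 j \in dvdz m.+1) =
    (m.+1 %| absz (d 0 i * d 0 j)%R * h (i, j))%N.
  by move=> le_ij; rewrite mxE le_ij mulrAC dvdzE !abszM !absz_nat.
apply/forallP/forallP => [conj_dvd [i j]|diag_dvd i].
  by apply/implyP => /= le_ij; rewrite -entryE // (forallP (conj_dvd i)).
apply/forallP => j; case: (leqP i j) => [le_ij|/ltnW le_ji].
  by rewrite entryE // (implyP (diag_dvd (i, j))).
rewrite -(sym_of_pattern_tr h) mxE mulrC [_ * sym_of_pattern h j i]mulrC mulrA.
by rewrite entryE // (implyP (diag_dvd (j, i))).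
Qed.

Lemma annihilated_pattern_of_mx (L Z : 'M[int]_n) : Z^T = Z ->
  annihilated L (pattern_of_mx Z) = (L^T *m Z *m L \is a mxOver (dvdz m.+1)).
Proof.
move=> Z_sym; have dvd_diff : L^T *m (sym_of_pattern (pattern_of_mx Z) - Z) *m L
    \is a mxOver (dvdz m.+1).
  by rewrite mxOver_dvdz_mulr // mxOver_dvdz_mull // sym_of_pattern_of_mx.
rewrite mulmxBr mulmxBl in dvd_diff.
by rewrite /annihilated -(rpredBr _ dvd_diff) opprB addrC subrK.
Qed.

Lemma annihilated_smith (L U V : 'M[int]_n) (d : 'rV[int]_n) h :
  V \in unitmx -> L = U *m diag_mx d *m V ->
  annihilated L h = diag_annihilated d (pattern_conj U h).
Proof.
move=> V_unit L_def; rewrite -annihilated_diag /annihilated.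
set Y := U^T *m sym_of_pattern h *m U.
have -> : L^T *m sym_of_pattern h *m L = V^T *m (diag_mx d *m Y *m diag_mx d) *m V.
  by rewrite L_def !trmx_mul tr_diag_mx !mulmxA.
rewrite mxOver_dvdz_unit_conj // tr_diag_mx.
have Y_sym : Y^T = Y by rewrite !trmx_mul trmxK sym_of_pattern_tr mulmxA.
have := annihilated_pattern_of_mx (diag_mx d) Y_sym.
by rewrite /annihilated tr_diag_mx => <-.
Qed.

Lemma card_annihilated (L U V : 'M[int]_n) (d : 'rV[int]_n) :
  U \in unitmx -> V \in unitmx -> L = U *m diag_mx d *m V ->
  #|[set h : pattern | upper_pattern h && annihilated L h]| =
  #|[set h : pattern | upper_pattern h && diag_annihilated d h]|.
Proof.
move=> U_unit V_unit L_def; rewrite -(card_in_imset (f := pattern_conj U)); last first.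
  move=> h1 h2; rewrite !inE => /andP[h1_upper _] /andP[h2_upper _] eq_conj.
  by rewrite -(pattern_conjK h1_upper (mulmxV U_unit)) eq_conj pattern_conjK // mulmxV.
apply: eq_card => h; rewrite inE; apply/imsetP/andP => [[h' + ->]|[h_upper h_diag]].
  by rewrite inE (annihilated_smith _ V_unit L_def) upper_pattern_of_mx => /andP[].
exists (pattern_conj (invmx U) h); last by rewrite pattern_conjK // mulVmx.
by rewrite inE upper_pattern_of_mx (annihilated_smith _ V_unit L_def) pattern_conjK // mulVmx.
Qed.

Lemma card_diag_annihilated (d : 'rV[int]_n) :
  #|[set h : pattern | upper_pattern h && diag_annihilated d h]| =
  (\prod_(p : 'I_n * 'I_n | p.1 <= p.2) gcdn (absz (d 0 p.1 * d 0 p.2)%R) m.+1)%N.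
Proof.
pose F (p : 'I_n * 'I_n) : pred 'I_m.+1 := if (p.1 <= p.2)%N
  then [pred x : 'I_m.+1 | (m.+1 %| absz (d 0 p.1 * d 0 p.2)%R * x)%N] else pred1 ord0.
rewrite (eq_card (B := family F)) => [|h]; last first.
  rewrite inE; apply/andP/familyP => [[/forallP h_upper /forallP h_diag] p|h_F].
    rewrite /F; case: leqP => [le_p|lt_p]; first exact: (implyP (h_diag p)).
    exact: (implyP (h_upper p)).
  split; apply/forallP => p; apply/implyP; have := h_F p; rewrite /F.
    by rewrite leqNgt => + lt_p; rewrite lt_p.
  by move=> + le_p; rewrite le_p.
rewrite card_family foldrE big_map big_enum [RHS]big_mkcond /=.
by apply: eq_bigr => p _; rewrite /F; case: ifP => _; rewrite ?card_ord_dvdn_mul ?card1.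
Qed.

End ResiduePatterns.

(** * Probability of a residue pattern *)

Local Open Scope classical_set_scope.

Lemma measurable_fibers_preimage d (T : measurableType d) (I : countType) (Y : T -> I) (A : set I) :
  (forall i, measurable [set w | Y w = i]) -> measurable (Y @^-1` A).
Proof.
move=> fiber_meas.
have -> : Y @^-1` A = \bigcup_i (if `[< A i >] then [set w | Y w = i] else set0).
  apply/seteqP; split => [w Aw|w [i _]]; first by exists (Y w); rewrite ?asboolT.
  by case: asboolP => // Ai /= Ywi; rewrite /preimage /= Ywi.
apply: countable_bigcupT_measurable; first exact: countableP.
by move=> i; case: asboolP => _; [exact: fiber_meas | exact: measurable0].
Qed.

Lemma measure_preimage_finset d (T : measurableType d) (R : realType)
  (mu : {measure set T -> \bar R}) (F : finType) (Y : T -> F) (S : {set F}) (c : R) :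
  (forall h, h \in S -> measurable [set w | Y w = h]) ->
  (forall h, h \in S -> mu [set w | Y w = h] = c%:E) ->
  mu [set w | Y w \in S] = (#|S|%:R * c)%:E.
Proof.
move=> fiber_meas fiber_mu.
have -> : [set w | Y w \in S] = \bigcup_(h in [set` enum S]) [set w | Y w = h].
  apply/seteqP; split => [w YwS|w [h + Ywh]]; last by rewrite /= Ywh mem_enum.
  by exists (Y w); rewrite //= mem_enum.
rewrite measure_fin_bigcup //; last 2 first.
- apply/trivIsetP => h1 h2 _ _ neq_h12; apply/seteqP; split => // w [/= Yw1 Yw2].
  by move: neq_h12; rewrite -Yw1 -Yw2 eqxx.
- by move=> h /=; rewrite mem_enum; exact: fiber_meas.
rewrite -fsbig_seq ?enum_uniq // big_enum /=.
rewrite (eq_bigr (fun=> c%:E)) => [|h hS]; last exact: fiber_mu.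
by rewrite sumEFin sumr_const mulr_natl.
Qed.

Section PatternProbability.

Variables (d : measure_display) (T : measurableType d) (R : realType).
Variables (P : probability T R) (n m : nat) (X : T -> 'M[int]_n).

Local Notation upper := [set p : 'I_n * 'I_n | (p.1 <= p.2)%N]%SET.

Hypothesis X_meas : forall (i j : 'I_n) (k : int), measurable [set w | X w i j = k].
Hypothesis X_indep :
  mutually_independent_int P upper (fun p w => (X w p.1 p.2 %% m.+1%:Z)%Z).
Hypothesis X_unif : forall i j : 'I_n, (i <= j)%N ->
  uniform_mod P m.+1 (fun w => (X w i j %% m.+1%:Z)%Z).

Lemma pattern_of_mx_fiber h : upper_pattern h ->
  [set w | pattern_of_mx m (X w) = h] =
  \bigcap_(p in [set p | p \in upper]) [set w | (X w p.1 p.2 %% m.+1%:Z)%Z = (h p : nat)%:Z].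
Proof.
move=> h_upper; apply/seteqP; split => [w /eqP/(pattern_of_mxP _ h_upper) mod_eq p|w mod_eq].
  by rewrite /= inE; exact: mod_eq.
by apply/eqP/(pattern_of_mxP _ h_upper) => p le_p; apply: mod_eq; rewrite /= inE.
Qed.

Lemma measurable_pattern_fiber h : upper_pattern h ->
  measurable [set w | pattern_of_mx m (X w) = h].
Proof.
move=> h_upper; rewrite pattern_of_mx_fiber //.
apply: fin_bigcap_measurable => [|p _]; first exact: finite_finset.
exact: (measurable_fibers_preimage [set z | (z %% m.+1%:Z)%Z = (h p : nat)%:Z] (X_meas p.1 p.2)).
Qed.

Lemma probability_pattern_fiber h : upper_pattern h ->
  P [set w | pattern_of_mx m (X w) = h] = ((m.+1%:R^-1) ^+ #|upper|)%:E.
Proof.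
move=> h_upper; rewrite pattern_of_mx_fiber // X_indep //.
rewrite (eq_bigr (fun=> (m.+1%:R^-1)%:E)) => [|p]; last first.
  by rewrite inE => le_p; apply: X_unif; rewrite // ltz_nat ltn_ord.
by rewrite prodEFin prodr_const.
Qed.

End PatternProbability.

Lemma Qint_divnE (k : nat) (z : int) : (0 < k)%N ->
  ((z%:~R / k%:R : rat) \is a Num.int) = (k%:Z %| z)%Z.
Proof.
move=> k_gt0; apply/idP/idP => [/intrP[q q_eq]|/Qint_dvdz//].
have k_neq0 : (k%:R : rat) != 0 by rewrite pnatr_eq0 -lt0n.
have : (z%:~R : rat) = (q * k%:Z)%:~R by rewrite intrM -q_eq divfK.
by move/intr_inj ->; rewrite dvdz_mull.
Qed.

Section ScaledOrthogonal.

Variables (n l : nat) (Q : 'M[rat]_n) (L : 'M[int]_n).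
Hypothesis L_def : map_mx (fun z : int => z%:~R : rat) L = l%:R *: Q.

Lemma gram_scaled_orthogonal : rat_orthogonal Q -> L^T *m L = (l ^ 2)%:Z%:M.
Proof.
move=> Q_orth.
suff /matrixP map_eq : map_mx (fun z : int => z%:~R : rat) (L^T *m L) =
    map_mx (fun z : int => z%:~R : rat) (l ^ 2)%:Z%:M.
  by apply/matrixP => i j; apply: (@intr_inj rat); have := map_eq i j; rewrite !mxE.
rewrite map_mxM -map_trmx L_def linearZ /= linearZ /= -scalemxAl Q_orth scalerA -natrM mulnn.
by apply/matrixP => i j; rewrite !mxE; case: (i == j); rewrite /= ?mulr1 ?mulr0.
Qed.

Lemma int_mx_conj_scaled (Z : 'M[int]_n) : (0 < l)%N ->
  int_mx (Q^T *m map_mx (fun z : int => z%:~R : rat) Z *m Q) <->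
  L^T *m Z *m L \is a mxOver (dvdz (l ^ 2)%:Z).
Proof.
move=> l_gt0; have l_neq0 : (l%:R : rat) != 0 by rewrite pnatr_eq0 -lt0n.
have -> : Q^T *m map_mx (fun z : int => z%:~R : rat) Z *m Q =
    (l ^ 2)%:R^-1 *: map_mx (fun z : int => z%:~R : rat) (L^T *m Z *m L).
  have -> : Q = l%:R^-1 *: map_mx (fun z : int => z%:~R : rat) L.
    by rewrite L_def scalerA mulVf // scale1r.
  by rewrite !map_mxM -map_trmx linearZ /= linearZ /= -!scalemxAl scalerA -invfM -natrM mulnn.
have l2_gt0 : (0 < l ^ 2)%N by rewrite expn_gt0 l_gt0.
split => [int_conj|/mxOverP dvd_conj i j]; last by rewrite 2!mxE mulrC Qint_divnE.
by apply/mxOverP => i j; have := int_conj i j; rewrite 2!mxE mulrC Qint_divnE.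
Qed.

End ScaledOrthogonal.

Theorem corollary1p5 (R : realType) (dsp : measure_display)
  (T : measurableType dsp) (P : probability T R)
  (n : nat) (Q : 'M[rat]_n) (l : nat) (L : 'M[int]_n) (d : seq int)
  (X : T -> 'M[int]_n) :
  (0 < n)%N ->
  rat_orthogonal Q ->
  is_level Q l ->
  map_mx (fun z : int => z%:~R : rat) L = l%:R *: Q ->
  smith_diag L d ->
  (forall w, (X w)^T = X w) ->
  (forall (i j : 'I_n) (k : int), measurable [set w | X w i j = k]) ->
  mutually_independent_int P [set p : 'I_n * 'I_n | (p.1 <= p.2)%N]
    (fun p w => (X w p.1 p.2 %% (l ^ 2)%:Z)%Z) ->
  (forall i j : 'I_n, (i <= j)%N ->
     uniform_mod P (l ^ 2) (fun w => (X w i j %% (l ^ 2)%:Z)%Z)) ->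
  P [set w | int_mx (Q^T *m map_mx (fun z : int => z%:~R : rat) (X w) *m Q)] =
  (\prod_(1 <= i < (n./2).+1) \prod_(i <= j < (n - i).+1)
      ((d`_i.-1 * d`_j.-1)%:~R / (l ^ 2)%:R) : R)%:E.
Proof.
move=> _ Q_orth [l_gt0 _] L_def [d_size d_ge0 d_sorted [U U_unit [V V_unit L_smith]]].
move=> X_sym X_meas X_indep X_unif.
set m := (l ^ 2).-1; have l2E : (l ^ 2 = m.+1)%N by rewrite prednK // expn_gt0 l_gt0.
have LtL := gram_scaled_orthogonal L_def Q_orth.
have int_conjE w := int_mx_conj_scaled L_def (X w) l_gt0.
rewrite l2E in X_indep X_unif LtL int_conjE *.
have {}L_smith : L = U *m diag_mx (\row_(i < n) d`_i) *m V.
  by rewrite L_smith; congr (_ *m _ *m _); apply/matrixP => i j; rewrite !mxE.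
pose S := [set h : {ffun 'I_n * 'I_n -> 'I_m.+1} | upper_pattern h && annihilated L h]%SET.
have -> : [set w | int_mx (Q^T *m map_mx (fun z : int => z%:~R : rat) (X w) *m Q)] =
    [set w | pattern_of_mx m (X w) \in S].
  apply/seteqP; split => w; rewrite /= inE upper_pattern_of_mx;
    by rewrite annihilated_pattern_of_mx //= => /int_conjE.
rewrite (measure_preimage_finset (mu := P) (Y := fun w => pattern_of_mx m (X w)) (S := S)
  (c := m.+1%:R^-1 ^+ #|[set p : 'I_n * 'I_n | (p.1 <= p.2)%N]%SET|)) => [|h|h]; first last.
- by rewrite inE => /andP[h_upper _]; exact: probability_pattern_fiber.
- by rewrite inE => /andP[h_upper _]; exact: measurable_pattern_fiber.
rewrite (card_annihilated m U_unit V_unit L_smith) card_diag_annihilated.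
rewrite -(prod_gcdn_smith (ltn0Sn m) LtL U_unit V_unit d_size d_ge0 d_sorted L_smith).
by congr ((_%:R * _)%:E); apply: eq_bigr => p _; rewrite !mxE.
Qed.
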